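(* Let $$B_1(x,y)=\frac{16-7x^2+8x-14xy+8y-7y^2}{16\sqrt{(2-x)(2-x-y)x}}.$$ If $0<y<x\le1$, then $B_1(x,y)>1$. *)

From Stdlib Require Import Reals.
Open Scope R_scope.

Definition B1_fn (x y : R) : R :=
  (16 - 7 * x ^ 2 + 8 * x - 14 * x * y + 8 * y - 7 * y ^ 2)
  / (16 * sqrt ((2 - x) * (2 - x - y) * x)).

(* The numerator of [B1] depends only on [s = x + y]: it is [16 + 8 s - 7 s^2],
   while the radicand factors as [x (2 - x) (2 - s)].  Since [t (2 - t)]
   increases on [[0, 1]] and [x < s], [x <= 1], the radicand is at most
   [s (2 - s)^2] when [s <= 1] and at most [2 - s] when [s >= 1].  In each case
   the square of the numerator exceeds [256] times that bound, a polynomial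
   inequality in one variable, so taking square roots gives [B1 > 1]. *)
From Stdlib Require Import Reals Lra Psatz.
Local Open Scope R_scope.

Lemma Rdiv_gt_1 (a b : R) : 0 < b -> b < a -> a / b > 1.
Proof.
intros Hb Hba. apply Rlt_gt.
apply (Rmult_lt_reg_r b); [exact Hb|].
unfold Rdiv. rewrite Rmult_assoc, Rinv_l, Rmult_1_l, Rmult_1_r by lra.
exact Hba.
Qed.

Lemma Rmult_sqrt_lt (c a b : R) :
  0 <= c -> 0 <= a -> 0 <= b -> c ^ 2 * a < b ^ 2 -> c * sqrt a < b.
Proof.
intros Hc Ha Hb Hlt.
rewrite <- (sqrt_pow2 c Hc), <- sqrt_mult, <- (sqrt_pow2 b Hb)
  by (try apply pow2_ge_0; assumption).
apply sqrt_lt_1; [apply Rmult_le_pos; [apply pow2_ge_0 | exact Ha] | apply pow2_ge_0 | exact Hlt].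
Qed.

Lemma mul_2_sub_le (a b : R) : 0 <= a -> a <= b -> b <= 1 -> a * (2 - a) <= b * (2 - b).
Proof. intros. nra. Qed.

Lemma mul_2_sub_le_1 (a : R) : a * (2 - a) <= 1.
Proof. pose proof (pow2_ge_0 (a - 1)). nra. Qed.

Definition B1_numer (s : R) : R := 16 + 8 * s - 7 * s ^ 2.

Lemma B1_numer_pos (s : R) : 0 <= s -> s <= 2 -> 0 < B1_numer s.
Proof. unfold B1_numer. intros. nra. Qed.

Lemma B1_numer_sqr_gt_small (s : R) :
  0 < s -> s <= 1 -> 256 * (s * (2 - s) * (2 - s)) < B1_numer s ^ 2.
Proof.
unfold B1_numer. intros.
pose proof (pow2_ge_0 (s - 1)). pose proof (pow2_ge_0 (s - 1/2)). nra.
Qed.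

Lemma B1_numer_sqr_gt_large (s : R) :
  1 <= s -> s <= 2 -> 256 * (2 - s) < B1_numer s ^ 2.
Proof.
unfold B1_numer. intros.
replace s with (2 - (2 - s)) by ring. set (t := 2 - s).
assert (0 <= t <= 1) by (unfold t; lra). clearbody t.
pose proof (pow2_ge_0 (t - 2/5)). pose proof (pow2_ge_0 (t ^ 2 - t)). nra.
Qed.

Lemma B1_numer_sum (x y : R) :
  16 - 7 * x ^ 2 + 8 * x - 14 * x * y + 8 * y - 7 * y ^ 2 = B1_numer (x + y).
Proof. unfold B1_numer. ring. Qed.

Lemma B1_radicand_sum (x y : R) :
  (2 - x) * (2 - x - y) * x = x * (2 - x) * (2 - (x + y)).
Proof. ring. Qed.

Lemma B1_radicand_pos (x y : R) :
  0 < y -> y < x -> x <= 1 -> 0 < x * (2 - x) * (2 - (x + y)).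
Proof. intros. apply Rmult_lt_0_compat; [apply Rmult_lt_0_compat|]; lra. Qed.

Lemma B1_radicand_lt (x y : R) :
  0 < y -> y < x -> x <= 1 ->
  16 ^ 2 * (x * (2 - x) * (2 - (x + y))) < B1_numer (x + y) ^ 2.
Proof.
intros Hy Hyx Hx. set (s := x + y).
assert (Hs : 0 <= 2 - s) by (unfold s; lra).
destruct (Rle_lt_dec s 1) as [Hs1 | Hs1].
- assert (x * (2 - x) <= s * (2 - s)) by (apply mul_2_sub_le; unfold s in *; lra).
  pose proof (B1_numer_sqr_gt_small s ltac:(unfold s; lra) Hs1). nra.
- pose proof (mul_2_sub_le_1 x).
  pose proof (B1_numer_sqr_gt_large s ltac:(lra) ltac:(lra)). nra.
Qed.

Theorem lemma3 (x y : R) (hy : (0 < y)%R) (hyx : (y < x)%R) (hx : (x <= 1)%R) :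
  (B1_fn x y > 1)%R.
Proof.
unfold B1_fn. rewrite B1_numer_sum, B1_radicand_sum.
pose proof (B1_radicand_pos x y hy hyx hx) as Hrad.
apply Rdiv_gt_1.
- apply Rmult_lt_0_compat; [lra | apply sqrt_lt_R0, Hrad].
- apply Rmult_sqrt_lt; [lra | lra | |].
  + apply Rlt_le, B1_numer_pos; lra.
  + exact (B1_radicand_lt x y hy hyx hx).
Qed.
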